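(* Let $c\ge0$, $d\in\{0,1,2,\dots\}$, $\lambda>0$, $q=e^{-\lambda/N}$, $\mathsf{s}=e^{-\lambda}$, and fix integers $p\ge1$, $0\le i\le p$. Then as $N\to\infty$, $$\int_0^1 f_i^{(c,d)}(Nt)\,dt=\Big(\frac{N}{\lambda}\Big)^p\frac{1}{i!(p-i)!}\Big(\mathcal{A}_{i,0}+\big(\mathcal{A}^{(1)}_{i,1}+\mathcal{A}^{(2)}_{i,1}+\mathcal{A}^{(3)}_{i,1}\big)\frac{\lambda}{N}+O(N^{-2})\Big),$$ where $\mathcal{A}_{i,0}=\mathsf{s}^{c(p-i)}\int_0^1\mathsf{s}^{pt}(1-\mathsf{s}^t)^{p-i}(1-\mathsf{s}^{c+t})^i\,dt$, $\mathcal{A}^{(1)}_{i,1}=\mathsf{s}^{c(p-i+1)}\frac{i(2d-i+1)}{2}\int_0^1\mathsf{s}^{(p+1)t}(1-\mathsf{s}^t)^{p-i}(1-\mathsf{s}^{c+t})^{i-1}\,dt$, $\mathcal{A}^{(2)}_{i,1}=\mathsf{s}^{c(p-i)}\frac{(p-i)(p-i+1)}{2}\int_0^1\mathsf{s}^{(p+1)t}(1-\mathsf{s}^t)^{p-i-1}(1-\mathsf{s}^{c+t})^{i}\,dt$, $\mathcal{A}^{(3)}_{i,1}=\frac{4di+2i^2+p-4dp-2ip+p^2}{4}\mathcal{A}_{i,0}$.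
   Context: For real $x$ and integer $m\ge0$ define $\begin{bmatrix} x\\ m\end{bmatrix}_q=\prod_{k=1}^{m}\frac{1-q^{x-m+k}}{1-q^{k}}$ (the usual $q$-binomial when $x$ is an integer). For real $y\ge0$ define $f_i^{(c,d)}(y)=q^{(cN+d)(p-i)+py}\begin{bmatrix} cN+d+y\\ i\end{bmatrix}_q\begin{bmatrix} p-i+y\\ p-i\end{bmatrix}_q$. *)

From Stdlib Require Import Reals Lra Lia List.
From Coquelicot Require Import Coquelicot.
Open Scope R_scope.

Definition rpow (a x : R) : R := Rpower a x.

Definition qbinom (q x : R) (m : nat) : R :=
  fold_right Rmult 1
    (map (fun k : nat => (1 - rpow q (x - INR m + INR k)) / (1 - q ^ k))
         (seq 1 m)).

Definition f_cd (lam : R) (N : nat) (p i : nat) (c : R) (d : nat) (y : R) : R :=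
  let q := exp (- lam / INR N) in
  let cNd := c * INR N + INR d in
  rpow q (cNd * (INR p - INR i) + INR p * y)
  * qbinom q (cNd + y) i
  * qbinom q (INR p - INR i + y) (p - i).

From Stdlib Require Import Reals Factorial Lra Lia List.
From Coquelicot Require Import Coquelicot.
Open Scope R_scope.

(* Put h = lam / N and q = exp (- h).  After the substitution y = N t, the product
   i! (p - i)! h^p f_i(N t) is a product of factors k h / (1 - q^k) * (1 - g(t) e^(-h m)),
   times exp (- h d (p - i)) and a function of t alone.  Each factor has a first-order
   expansion u(t) + h v(t) + O(h^2), uniform in t on [0, 1], because
   k h / (1 - e^(-k h)) = 1 + k h / 2 + O(h^2) and e^(-h m) = 1 - h m + O(h^2).  Such expansions
   multiply by the Leibniz rule and can be integrated term by term; collecting the first-order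
   terms of the product gives the three corrections A1_1, A1_2, A1_3. *)

Lemma Derive_n_exp_scal a n x :
  Derive_n (fun z => exp (a * z)) n x = a ^ n * exp (a * x).
Proof.
  revert x; induction n as [|n IH]; intros x; simpl; [ring|].
  rewrite (Derive_ext _ (fun z => a ^ n * exp (a * z))) by apply IH.
  apply is_derive_unique. auto_derive; auto. ring.
Qed.

Lemma ex_derive_n_exp_scal a n x : ex_derive_n (fun z => exp (a * z)) n x.
Proof.
  destruct n as [|n]; simpl; auto.
  apply (ex_derive_ext (fun z => a ^ n * exp (a * z))).
  - intros z; symmetry; apply Derive_n_exp_scal.
  - auto_derive; auto.
Qed.

Lemma exp_scal_taylor a n x : 0 < x -> exists z, 0 < z < x /\
  exp (a * x) = sum_f_R0 (fun m => (a * x) ^ m / INR (fact m)) n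
                + (a * x) ^ S n / INR (fact (S n)) * exp (a * z).
Proof.
  intros Hx.
  destruct (Taylor_Lagrange (fun z => exp (a * z)) n 0 x Hx) as [z [Hz E]].
  { intros; apply ex_derive_n_exp_scal. }
  exists z; split; [exact Hz|].
  rewrite E, Derive_n_exp_scal, Rminus_0_r. f_equal.
  - apply sum_eq; intros m _. rewrite Derive_n_exp_scal, Rmult_0_r, exp_0, Rpow_mult_distr.
    unfold Rdiv; ring.
  - rewrite Rpow_mult_distr. unfold Rdiv; ring.
Qed.

Lemma exp_taylor1_bound y : Rabs y <= 1 -> Rabs (exp y - 1 - y) <= 2 * y ^ 2.
Proof.
  intros Hy.
  destruct (Rtotal_order y 0) as [Hneg|[->|Hpos]].
  - rewrite Rabs_left in Hy by lra.
    destruct (exp_scal_taylor (-1) 1 (- y)) as [z [Hz E]]; [lra|].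
    replace (-1 * - y) with y in E by ring. rewrite E.
    simpl. assert (exp (-1 * z) <= 1).
    { rewrite <- exp_0. apply Rlt_le, exp_increasing; lra. }
    pose proof (exp_pos (-1 * z)). rewrite Rabs_pos_eq; nra.
  - rewrite exp_0. replace (1 - 1 - 0) with 0 by ring. rewrite Rabs_R0. nra.
  - rewrite Rabs_pos_eq in Hy by lra.
    destruct (exp_scal_taylor 1 1 y) as [z [Hz E]]; [lra|].
    rewrite Rmult_1_l in E. rewrite E.
    simpl. assert (exp (1 * z) <= 3).
    { apply Rle_trans with (exp 1); [|apply exp_le_3].
      apply Rlt_le, exp_increasing; lra. }
    pose proof (exp_pos (1 * z)). rewrite Rabs_pos_eq; nra.
Qed.

Lemma one_sub_exp_ratio_bound x : 0 < x <= 1 ->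
  Rabs (x / (1 - exp (- x)) - 1 - x / 2) <= x ^ 2.
Proof.
  intros Hx.
  destruct (exp_scal_taylor (-1) 1 x) as [z1 [Hz1 E1]]; [lra|].
  destruct (exp_scal_taylor (-1) 2 x) as [z2 [Hz2 E2]]; [lra|].
  replace (-1 * x) with (- x) in E1, E2 by ring. simpl in E1, E2.
  assert (0 < exp (-1 * z1) <= 1 /\ 0 < exp (-1 * z2) <= 1) as [B1 B2].
  { rewrite <- exp_0. split; split; try apply exp_pos;
      apply Rlt_le, exp_increasing; lra. }
  set (E := exp (- x)) in *.
  assert (Hsecond : E - 1 + x <= x ^ 2 / 2).
  { rewrite E1. nra. }
  assert (Hthird : - (x ^ 3 / 6) <= E - 1 + x - x ^ 2 / 2 <= 0).
  { rewrite E2. assert (0 < x ^ 3) by (apply pow_lt; lra). split; nra. }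
  assert (Hden : x / 2 <= 1 - E) by nra.
  (* after multiplying by 1 - E >= x / 2, only third-order Taylor terms remain *)
  assert (Hv : (x / (1 - E) - 1 - x / 2) * (1 - E)
               = (E - 1 + x - x ^ 2 / 2) * (1 + x / 2) + x ^ 3 / 4) by (field; lra).
  set (v := x / (1 - E) - 1 - x / 2) in *.
  apply Rabs_le. split; nra.
Qed.

Lemma continuous_bounded_01 (g : R -> R) : (forall t, continuous g t) ->
  exists B, forall t, 0 <= t <= 1 -> Rabs (g t) <= B.
Proof.
  intros Hg.
  destruct (continuity_ab_maj (fun t => Rabs (g t)) 0 1) as [M [HM _]]; [lra| |].
  - intros t _. apply continuity_pt_filterlim, continuous_Rabs_comp, Hg.
  - exists (Rabs (g M)). exact HM.
Qed.

Definition expansion1 (F : R -> R -> R) (u v : R -> R) : Prop :=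
  (forall t, continuous u t) /\ (forall t, continuous v t) /\
  exists h0 C, 0 < h0 /\ forall h, 0 < h <= h0 ->
    (forall t, continuous (F h) t) /\
    (forall t, 0 <= t <= 1 -> Rabs (F h t - u t - h * v t) <= C * h ^ 2).

Lemma expansion1_ext F u v F' u' v' : expansion1 F u v ->
  (forall h t, F h t = F' h t) -> (forall t, u t = u' t) -> (forall t, v t = v' t) ->
  expansion1 F' u' v'.
Proof.
  intros (Hu & Hv & h0 & C & Hh0 & HF) EF Eu Ev.
  split; [|split].
  { intros t; apply (continuous_ext u); auto. }
  { intros t; apply (continuous_ext v); auto. }
  exists h0, C; split; [exact Hh0|]. intros h Hh. destruct (HF h Hh) as [HFc HFb].
  split.
  - intros t; apply (continuous_ext (F h)); auto.
  - intros t Ht. rewrite <- EF, <- Eu, <- Ev. auto.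
Qed.

Lemma expansion1_of_h (phi : R -> R) a b h0 C : 0 < h0 ->
  (forall h, 0 < h <= h0 -> Rabs (phi h - a - h * b) <= C * h ^ 2) ->
  expansion1 (fun h _ => phi h) (fun _ => a) (fun _ => b).
Proof.
  intros Hh0 Hphi. split; [|split]; [intros; apply continuous_const ..|].
  exists h0, C; split; [exact Hh0|]. intros h Hh; split.
  - intros; apply continuous_const.
  - intros; auto.
Qed.

Lemma expansion1_of_t (g : R -> R) : (forall t, continuous g t) ->
  expansion1 (fun _ t => g t) g (fun _ => 0).
Proof.
  intros Hg. split; [|split]; [auto | intros; apply continuous_const |].
  exists 1, 0; split; [lra|]. intros h Hh; split; [auto|].
  intros t _. replace (g t - g t - h * 0) with 0 by ring. rewrite Rabs_R0. lra.
Qed.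

Lemma expansion1_const_sub a F u v : expansion1 F u v ->
  expansion1 (fun h t => a - F h t) (fun t => a - u t) (fun t => - v t).
Proof.
  intros (Hu & Hv & h0 & C & Hh0 & HF).
  split; [|split].
  - intros t; apply (continuous_minus (fun _ => a) u), Hu; apply continuous_const.
  - intros t; apply (continuous_opp v), Hv.
  - exists h0, C; split; [exact Hh0|]. intros h Hh. destruct (HF h Hh) as [HFc HFb]. split.
    + intros t; apply (continuous_minus (fun _ => a) (F h)), HFc; apply continuous_const.
    + intros t Ht. rewrite <- Rabs_Ropp.
      replace (- (a - F h t - (a - u t) - h * - v t)) with (F h t - u t - h * v t) by ring.
      auto.
Qed.

Lemma product_error_bound h a1 b1 e1 a2 b2 e2 A1 B1 E1 A2 B2 E2 : 0 < h <= 1 ->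
  Rabs a1 <= A1 -> Rabs b1 <= B1 -> Rabs e1 <= E1 * h ^ 2 ->
  Rabs a2 <= A2 -> Rabs b2 <= B2 -> Rabs e2 <= E2 * h ^ 2 ->
  Rabs ((a1 + h * b1 + e1) * (a2 + h * b2 + e2) - a1 * a2 - h * (a1 * b2 + b1 * a2))
  <= (B1 * B2 + (A1 + B1) * E2 + E1 * (A2 + B2) + E1 * E2) * h ^ 2.
Proof.
  intros Hh Ha1 Hb1 He1 Ha2 Hb2 He2.
  assert (Hh2 : 0 < h ^ 2 <= 1) by (split; [apply pow_lt|]; nra).
  assert (0 <= E1 /\ 0 <= E2) as [HE1 HE2].
  { pose proof (Rabs_pos e1); pose proof (Rabs_pos e2). split; nra. }
  assert (Hc1 : Rabs (a1 + h * b1) <= A1 + B1).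
  { eapply Rle_trans; [apply Rabs_triang|]. rewrite Rabs_mult, (Rabs_pos_eq h) by lra.
    pose proof (Rabs_pos b1). nra. }
  assert (Hc2 : Rabs (a2 + h * b2) <= A2 + B2).
  { eapply Rle_trans; [apply Rabs_triang|]. rewrite Rabs_mult, (Rabs_pos_eq h) by lra.
    pose proof (Rabs_pos b2). nra. }
  replace ((a1 + h * b1 + e1) * (a2 + h * b2 + e2) - a1 * a2 - h * (a1 * b2 + b1 * a2))
    with (h ^ 2 * (b1 * b2) + (a1 + h * b1) * e2 + e1 * (a2 + h * b2) + e1 * e2) by ring.
  assert (Htri : forall w x y z, Rabs (w + x + y + z) <= Rabs w + Rabs x + Rabs y + Rabs z).
  { intros. pose proof (Rabs_triang (w + x + y) z); pose proof (Rabs_triang (w + x) y).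
    pose proof (Rabs_triang w x). lra. }
  eapply Rle_trans; [apply Htri|].
  rewrite !Rabs_mult, (Rabs_pos_eq (h ^ 2)) by lra.
  pose proof (Rabs_pos b1); pose proof (Rabs_pos b2); pose proof (Rabs_pos e1).
  pose proof (Rabs_pos e2); pose proof (Rabs_pos (a1 + h * b1)); pose proof (Rabs_pos (a2 + h * b2)).
  assert (Rabs b1 * Rabs b2 <= B1 * B2) by (apply Rmult_le_compat; auto).
  assert (Rabs (a1 + h * b1) * Rabs e2 <= (A1 + B1) * (E2 * h ^ 2)) by (apply Rmult_le_compat; auto).
  assert (Rabs e1 * Rabs (a2 + h * b2) <= (E1 * h ^ 2) * (A2 + B2)) by (apply Rmult_le_compat; auto).
  assert (Rabs e1 * Rabs e2 <= (E1 * h ^ 2) * (E2 * h ^ 2)) by (apply Rmult_le_compat; auto).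
  assert (E1 * h ^ 2 * (E2 * h ^ 2) <= E1 * E2 * h ^ 2).
  { assert (0 <= E1 * E2 * h ^ 2) by (apply Rmult_le_pos; [apply Rmult_le_pos|]; lra). nra. }
  nra.
Qed.

Lemma expansion1_mul F1 u1 v1 F2 u2 v2 : expansion1 F1 u1 v1 -> expansion1 F2 u2 v2 ->
  expansion1 (fun h t => F1 h t * F2 h t) (fun t => u1 t * u2 t)
             (fun t => u1 t * v2 t + v1 t * u2 t).
Proof.
  intros (Hu1 & Hv1 & h1 & C1 & Hh1 & HF1) (Hu2 & Hv2 & h2 & C2 & Hh2 & HF2).
  destruct (continuous_bounded_01 u1 Hu1) as [A1 HA1].
  destruct (continuous_bounded_01 v1 Hv1) as [B1 HB1].
  destruct (continuous_bounded_01 u2 Hu2) as [A2 HA2].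
  destruct (continuous_bounded_01 v2 Hv2) as [B2 HB2].
  split; [|split].
  - intros t; apply (continuous_mult u1 u2); auto.
  - intros t; apply (continuous_plus (fun t => u1 t * v2 t) (fun t => v1 t * u2 t));
      [apply (continuous_mult u1 v2) | apply (continuous_mult v1 u2)]; auto.
  - exists (Rmin 1 (Rmin h1 h2)), (B1 * B2 + (A1 + B1) * C2 + C1 * (A2 + B2) + C1 * C2).
    split; [repeat apply Rmin_glb_lt; lra|].
    intros h Hh.
    pose proof (Rmin_l 1 (Rmin h1 h2)); pose proof (Rmin_r 1 (Rmin h1 h2)).
    pose proof (Rmin_l h1 h2); pose proof (Rmin_r h1 h2).
    destruct (HF1 h ltac:(lra)) as [HF1c HF1b]. destruct (HF2 h ltac:(lra)) as [HF2c HF2b].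
    split.
    + intros t; apply (continuous_mult (F1 h) (F2 h)); auto.
    + intros t Ht.
      replace (F1 h t * F2 h t) with
        ((u1 t + h * v1 t + (F1 h t - u1 t - h * v1 t))
         * (u2 t + h * v2 t + (F2 h t - u2 t - h * v2 t))) by ring.
      apply product_error_bound; auto; lra.
Qed.

Lemma expansion1_RInt F u v U V : expansion1 F u v ->
  is_RInt u 0 1 U -> is_RInt v 0 1 V ->
  exists h0 C, 0 < h0 /\ forall h, 0 < h <= h0 ->
    ex_RInt (F h) 0 1 /\ Rabs (RInt (F h) 0 1 - U - h * V) <= C * h ^ 2.
Proof.
  intros (_ & _ & h0 & C & Hh0 & HF) HU HV.
  exists h0, C; split; [exact Hh0|]. intros h Hh. destruct (HF h Hh) as [HFc HFb].
  assert (HFi : ex_RInt (F h) 0 1) by (apply (ex_RInt_continuous (V := R_CompleteNormedModule)); auto).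
  split; [exact HFi|].
  assert (Herr : is_RInt (fun t => F h t - u t - h * v t) 0 1 (RInt (F h) 0 1 - U - h * V)).
  { apply (@is_RInt_minus R_NormedModule (fun t => F h t - u t) (fun t => h * v t)).
    - apply (@is_RInt_minus R_NormedModule); [apply (RInt_correct (V := R_CompleteNormedModule))|]; auto.
    - apply (@is_RInt_scal R_NormedModule v). exact HV. }
  rewrite <- (is_RInt_unique _ _ _ _ Herr).
  replace (C * h ^ 2) with ((1 - 0) * (C * h ^ 2)) by ring.
  apply abs_RInt_le_const; [lra | eexists; exact Herr | auto].
Qed.

Lemma expansion1_exp m :
  expansion1 (fun h _ => exp (- (h * m))) (fun _ => 1) (fun _ => - m).
Proof.
  assert (Hm : 0 < Rabs m + 1) by (pose proof (Rabs_pos m); lra).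
  apply (expansion1_of_h _ _ _ (/ (Rabs m + 1)) (2 * m ^ 2)).
  { apply Rinv_0_lt_compat; lra. }
  intros h Hh.
  assert (Hhm : Rabs (- (h * m)) <= 1).
  { rewrite Rabs_Ropp, Rabs_mult, (Rabs_pos_eq h) by lra.
    apply Rle_trans with (/ (Rabs m + 1) * (Rabs m + 1)).
    - apply Rmult_le_compat; try lra; apply Rabs_pos.
    - right; field; lra. }
  replace (exp (- (h * m)) - 1 - h * - m) with (exp (- (h * m)) - 1 - - (h * m)) by ring.
  replace (2 * m ^ 2 * h ^ 2) with (2 * (- (h * m)) ^ 2) by ring.
  apply exp_taylor1_bound, Hhm.
Qed.

Lemma expansion1_ratio k : (1 <= k)%nat ->
  expansion1 (fun h _ => INR k * h / (1 - exp (- h) ^ k)) (fun _ => 1) (fun _ => INR k / 2).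
Proof.
  intros Hk. assert (Hk' : 1 <= INR k) by (apply (le_INR 1); auto).
  apply (expansion1_of_h _ _ _ (/ INR k) (INR k ^ 2)).
  { apply Rinv_0_lt_compat; lra. }
  intros h Hh.
  assert (Hkh : 0 < INR k * h <= 1).
  { split; [nra|]. apply Rle_trans with (INR k * / INR k); [nra | right; field; lra]. }
  rewrite <- Rpower_pow by apply exp_pos. unfold Rpower. rewrite ln_exp.
  replace (INR k * - h) with (- (INR k * h)) by ring.
  replace (h * (INR k / 2)) with (INR k * h / 2) by field.
  replace (INR k ^ 2 * h ^ 2) with ((INR k * h) ^ 2) by ring.
  apply one_sub_exp_ratio_bound, Hkh.
Qed.

Fixpoint prod_f_R1 (A : nat -> R) (n : nat) : R :=
  match n with O => 1 | S m => prod_f_R1 A m * A (S m) end.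

Lemma fold_right_map_seq1 (A : nat -> R) n :
  fold_right Rmult 1 (map A (seq 1 n)) = prod_f_R1 A n.
Proof.
  induction n as [|n IH]; [reflexivity|].
  rewrite seq_S, map_app, fold_right_app. simpl. rewrite <- IH.
  replace (1 + n)%nat with (S n) by lia.
  generalize (map A (seq 1 n)). intros l. induction l as [|a l IHl]; simpl; [ring|].
  rewrite IHl. ring.
Qed.

Lemma prod_f_R1_ext (A B : nat -> R) n : (forall k, A k = B k) -> prod_f_R1 A n = prod_f_R1 B n.
Proof. intros E; induction n as [|n IH]; simpl; [reflexivity|]. rewrite IH, E. reflexivity. Qed.

Lemma prod_f_R1_mult (A B : nat -> R) n :
  prod_f_R1 A n * prod_f_R1 B n = prod_f_R1 (fun k => A k * B k) n.
Proof. induction n as [|n IH]; simpl; [ring|]. rewrite <- IH. ring. Qed.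

Lemma prod_f_R1_fact_pow h n : INR (fact n) * h ^ n = prod_f_R1 (fun k => INR k * h) n.
Proof.
  induction n as [|n IH]; [simpl; ring|].
  cbn [prod_f_R1]. rewrite <- IH, fact_simpl, mult_INR. simpl pow. ring.
Qed.

Lemma qbinom_scaled h x n :
  INR (fact n) * h ^ n * qbinom (exp (- h)) x n
  = prod_f_R1 (fun k => INR k * h / (1 - exp (- h) ^ k)
                        * (1 - rpow (exp (- h)) (x - INR n + INR k))) n.
Proof.
  unfold qbinom. rewrite fold_right_map_seq1, prod_f_R1_fact_pow, prod_f_R1_mult.
  apply prod_f_R1_ext. intros k. unfold Rdiv. ring.
Qed.

Lemma rpow_exp a y : rpow (exp a) y = exp (y * a).
Proof. unfold rpow, Rpower. rewrite ln_exp. reflexivity. Qed.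

Lemma rpow_plus a x y : rpow a (x + y) = rpow a x * rpow a y.
Proof. apply Rpower_plus. Qed.

Lemma rpow_exp_scaled lam n x y : n <> 0 ->
  rpow (exp (- (lam / n))) (n * x + y) = rpow (exp (- lam)) x * exp (- (lam / n * y)).
Proof. intros Hn. rewrite !rpow_exp, <- exp_plus. f_equal. field. exact Hn. Qed.

(* With q = exp (- h), the k-th factor of h^n n! [x; n]_q (see qbinom_scaled) when
   q^(x - n) = g t * exp (- h r). *)
Definition qfactor (g : R -> R) (r : R) (k : nat) (h t : R) : R :=
  INR k * h / (1 - exp (- h) ^ k) * (1 - g t * exp (- (h * (r + INR k)))).

Lemma expansion1_qfactor (g : R -> R) r k : (1 <= k)%nat -> (forall t, continuous g t) ->
  expansion1 (qfactor g r k) (fun t => 1 - g t)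
             (fun t => (r + INR k) * g t + INR k / 2 * (1 - g t)).
Proof.
  intros Hk Hg.
  eapply expansion1_ext.
  - eapply expansion1_mul; [apply (expansion1_ratio k Hk)|].
    eapply (expansion1_const_sub 1), expansion1_mul; [apply (expansion1_of_t g Hg)|].
    apply (expansion1_exp (r + INR k)).
  all: intros; unfold qfactor; ring.
Qed.

Lemma expansion1_qfactor_prod (g : R -> R) r n : (forall t, continuous g t) ->
  expansion1 (fun h t => prod_f_R1 (fun k => qfactor g r k h t) n) (fun t => (1 - g t) ^ n)
    (fun t => (INR n * r + INR n * (INR n + 1) / 2) * g t * (1 - g t) ^ (n - 1)
              + INR n * (INR n + 1) / 4 * (1 - g t) ^ n).
Proof.
  intros Hg. induction n as [|n IH].
  - eapply expansion1_ext; [apply (expansion1_of_t (fun _ => 1)), continuous_const | | |];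
      intros; cbn [INR prod_f_R1 pow Nat.sub]; field.
  - eapply expansion1_ext.
    + eapply expansion1_mul; [exact IH | apply (expansion1_qfactor g r (S n)); auto; lia].
    + reflexivity.
    + intros; simpl; ring.
    + intros t. rewrite !S_INR. destruct n as [|n].
      * simpl. field.
      * rewrite !Nat.sub_succ, !Nat.sub_0_r, S_INR. simpl. field.
Qed.


Definition weight (s c e : R) (a b : nat) (t : R) : R :=
  rpow s (e * t) * (1 - rpow s t) ^ a * (1 - rpow s (c + t)) ^ b.

Lemma continuous_weight s c e a b t : continuous (weight s c e a b) t.
Proof.
  apply (@ex_derive_continuous R_AbsRing R_NormedModule).
  unfold weight, rpow, Rpower. auto_derive. exact I.
Qed.

Definition scaled_integrand (s c : R) (d p i : nat) (h t : R) : R :=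
  rpow s (c * (INR p - INR i)) * rpow s (INR p * t) * exp (- (h * (INR d * (INR p - INR i))))
  * prod_f_R1 (fun k => qfactor (fun t => rpow s (c + t)) (INR d - INR i) k h t) i
  * prod_f_R1 (fun k => qfactor (rpow s) 0 k h t) (p - i).

Lemma f_cd_scaled lam c d p i N t : (1 <= N)%nat -> (i <= p)%nat ->
  INR (fact i) * INR (fact (p - i)) * (lam / INR N) ^ p * f_cd lam N p i c d (INR N * t)
  = scaled_integrand (exp (- lam)) c d p i (lam / INR N) t.
Proof.
  intros HN Hi. assert (HN' : INR N <> 0) by (apply not_0_INR; lia).
  unfold f_cd, scaled_integrand. cbv zeta. rewrite Rdiv_opp_l.
  replace ((lam / INR N) ^ p) with ((lam / INR N) ^ i * (lam / INR N) ^ (p - i))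
    by (rewrite <- pow_add; f_equal; lia).
  match goal with |- _ = ?rhs => transitivity
    (rpow (exp (- (lam / INR N))) ((c * INR N + INR d) * (INR p - INR i) + INR p * (INR N * t))
     * (INR (fact i) * (lam / INR N) ^ i
        * qbinom (exp (- (lam / INR N))) (c * INR N + INR d + INR N * t) i)
     * (INR (fact (p - i)) * (lam / INR N) ^ (p - i)
        * qbinom (exp (- (lam / INR N))) (INR p - INR i + INR N * t) (p - i))); [ring|] end.
  rewrite !qbinom_scaled.
  replace ((c * INR N + INR d) * (INR p - INR i) + INR p * (INR N * t))
    with (INR N * (c * (INR p - INR i) + INR p * t) + INR d * (INR p - INR i)) by ring.
  rewrite rpow_exp_scaled, rpow_plus by exact HN'.
  f_equal; [f_equal|]; apply prod_f_R1_ext; intros k; unfold qfactor; f_equal; f_equal.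
  - replace (c * INR N + INR d + INR N * t - INR i + INR k)
      with (INR N * (c + t) + (INR d - INR i + INR k)) by ring.
    apply rpow_exp_scaled, HN'.
  - rewrite minus_INR by exact Hi.
    replace (INR p - INR i + INR N * t - (INR p - INR i) + INR k)
      with (INR N * t + (0 + INR k)) by ring.
    apply rpow_exp_scaled, HN'.
Qed.

Lemma scaled_integrand_expansion s c d p i : (i <= p)%nat ->
  expansion1 (scaled_integrand s c d p i)
    (fun t => rpow s (c * (INR p - INR i)) * weight s c (INR p) (p - i) i t)
    (fun t => rpow s (c * (INR p - INR i + 1)) * (INR i * (2 * INR d - INR i + 1) / 2)
                * weight s c (INR p + 1) (p - i) (i - 1) t
              + rpow s (c * (INR p - INR i)) * ((INR p - INR i) * (INR p - INR i + 1) / 2)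
                * weight s c (INR p + 1) (p - i - 1) i t
              + (4 * INR d * INR i + 2 * INR i ^ 2 + INR p - 4 * INR d * INR p
                 - 2 * INR i * INR p + INR p ^ 2) / 4
                * (rpow s (c * (INR p - INR i)) * weight s c (INR p) (p - i) i t)).
Proof.
  intros Hi.
  eapply expansion1_ext.
  - eapply expansion1_mul; [eapply expansion1_mul; [eapply expansion1_mul|] |].
    + apply (expansion1_of_t (fun t => rpow s (c * (INR p - INR i)) * rpow s (INR p * t))).
      intros t; apply (@ex_derive_continuous R_AbsRing R_NormedModule).
      unfold rpow, Rpower; auto_derive; exact I.
    + apply (expansion1_exp (INR d * (INR p - INR i))).
    + apply (expansion1_qfactor_prod (fun t => rpow s (c + t)) (INR d - INR i) i).
      intros t; apply (@ex_derive_continuous R_AbsRing R_NormedModule).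
      unfold rpow, Rpower; auto_derive; exact I.
    + apply (expansion1_qfactor_prod (rpow s) 0 (p - i)).
      intros t; apply (@ex_derive_continuous R_AbsRing R_NormedModule).
      unfold rpow, Rpower; auto_derive; exact I.
  - reflexivity.
  - intros t; unfold weight; ring.
  - intros t; unfold weight. rewrite minus_INR by exact Hi.
    replace ((INR p + 1) * t) with (INR p * t + t) by ring.
    replace (c * (INR p - INR i + 1)) with (c * (INR p - INR i) + c) by ring.
    rewrite !rpow_plus. field.
Qed.

Lemma RInt_f_cd lam c d p i N : 0 < lam -> (1 <= N)%nat -> (i <= p)%nat ->
  ex_RInt (scaled_integrand (exp (- lam)) c d p i (lam / INR N)) 0 1 ->
  RInt (fun t => f_cd lam N p i c d (INR N * t)) 0 1
  = (INR N / lam) ^ p / (INR (fact i) * INR (fact (p - i)))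
    * RInt (scaled_integrand (exp (- lam)) c d p i (lam / INR N)) 0 1.
Proof.
  intros Hlam HN Hi Hex.
  assert (HN' : 0 < INR N) by (apply lt_0_INR; lia).
  rewrite <- (RInt_scal (V := R_CompleteNormedModule) _ _ _ _ Hex).
  apply RInt_ext. intros t _. rewrite <- f_cd_scaled by assumption.
  unfold scal; simpl; unfold mult; simpl.
  assert (Hpow : (INR N / lam) ^ p * (lam / INR N) ^ p = 1).
  { rewrite <- Rpow_mult_distr. replace (INR N / lam * (lam / INR N)) with 1 by (field; lra).
    apply pow1. }
  transitivity ((INR N / lam) ^ p * (lam / INR N) ^ p * f_cd lam N p i c d (INR N * t));
    [rewrite Hpow; ring | field; split; apply INR_fact_neq_0].
Qed.

Lemma eventually_div_INR_le lam h0 : 0 < lam -> 0 < h0 ->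
  exists N0, forall N, (N0 <= N)%nat -> (1 <= N)%nat /\ 0 < lam / INR N <= h0.
Proof.
  intros Hlam Hh0. destruct (INR_unbounded (lam / h0)) as [M HM].
  exists (S M). intros N HN. split; [lia|].
  assert (HMN : INR M < INR N) by (apply lt_INR; lia).
  assert (0 < lam / h0) by (apply Rdiv_lt_0_compat; lra).
  split; [apply Rdiv_lt_0_compat; lra|].
  apply Rle_trans with (lam / (lam / h0)).
  - apply Rmult_le_compat_l; [lra|]. apply Rinv_le_contravar; lra.
  - right; field; lra.
Qed.

Theorem lemma2p8 (c lam : R) (d p i : nat) :
  0 <= c -> 0 < lam -> (1 <= p)%nat -> (i <= p)%nat ->
  let s := exp (- lam) in
  let A0 := rpow s (c * (INR p - INR i)) *
    RInt (fun t => rpow s (INR p * t) * (1 - rpow s t) ^ (p - i)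
                   * (1 - rpow s (c + t)) ^ i) 0 1 in
  let A1_1 := rpow s (c * (INR p - INR i + 1)) *
    (INR i * (2 * INR d - INR i + 1) / 2) *
    RInt (fun t => rpow s ((INR p + 1) * t) * (1 - rpow s t) ^ (p - i)
                   * (1 - rpow s (c + t)) ^ (i - 1)) 0 1 in
  let A1_2 := rpow s (c * (INR p - INR i)) *
    ((INR p - INR i) * (INR p - INR i + 1) / 2) *
    RInt (fun t => rpow s ((INR p + 1) * t) * (1 - rpow s t) ^ (p - i - 1)
                   * (1 - rpow s (c + t)) ^ i) 0 1 in
  let A1_3 := (4 * INR d * INR i + 2 * INR i ^ 2 + INR p - 4 * INR d * INR p
               - 2 * INR i * INR p + INR p ^ 2) / 4 * A0 in
  exists C : R, exists N0 : nat, forall N : nat, (N0 <= N)%nat ->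
    Rabs (RInt (fun t => f_cd lam N p i c d (INR N * t)) 0 1
          - (INR N / lam) ^ p / (INR (fact i) * INR (fact (p - i)))
            * (A0 + (A1_1 + A1_2 + A1_3) * (lam / INR N)))
    <= (INR N / lam) ^ p / (INR (fact i) * INR (fact (p - i))) * (C / INR N ^ 2).
Proof.
  intros _ Hlam _ Hi s A0 A1_1 A1_2 A1_3.
  assert (Hw : forall e a b, is_RInt (weight s c e a b) 0 1 (RInt (weight s c e a b) 0 1)).
  { intros. apply (RInt_correct (V := R_CompleteNormedModule)),
      (ex_RInt_continuous (V := R_CompleteNormedModule)); intros; apply continuous_weight. }
  destruct (expansion1_RInt _ _ _ A0 (A1_1 + A1_2 + A1_3) (scaled_integrand_expansion s c d p i Hi))
    as (h0 & C & Hh0 & HF).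
  { exact (is_RInt_scal _ _ _ _ _ (Hw _ _ _)). }
  { exact (is_RInt_plus _ _ _ _ _ _
             (is_RInt_plus _ _ _ _ _ _ (is_RInt_scal _ _ _ _ _ (Hw _ _ _))
                (is_RInt_scal _ _ _ _ _ (Hw _ _ _)))
             (is_RInt_scal _ _ _ _ _ (is_RInt_scal _ _ _ _ _ (Hw _ _ _)))). }
  destruct (eventually_div_INR_le lam h0 Hlam Hh0) as [N0 HN0].
  exists (C * lam ^ 2), N0. intros N HN.
  destruct (HN0 N HN) as [HN1 Hh]. destruct (HF _ Hh) as [Hex Hbound].
  rewrite (RInt_f_cd lam c d p i N Hlam HN1 Hi Hex).
  set (P := (INR N / lam) ^ p / (INR (fact i) * INR (fact (p - i)))).
  assert (HP : 0 < P).
  { apply Rdiv_lt_0_compat; [apply pow_lt, Rdiv_lt_0_compat; [apply lt_0_INR; lia | lra]|].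
    apply Rmult_lt_0_compat; apply lt_0_INR, lt_O_fact. }
  replace (C * lam ^ 2 / INR N ^ 2) with (C * (lam / INR N) ^ 2)
    by (field; apply not_0_INR; lia).
  rewrite <- Rmult_minus_distr_l, Rabs_mult, (Rabs_pos_eq P) by lra.
  apply Rmult_le_compat_l; [lra|].
  match goal with |- Rabs (?r - _) <= _ =>
    replace (r - (A0 + (A1_1 + A1_2 + A1_3) * (lam / INR N)))
      with (r - A0 - lam / INR N * (A1_1 + A1_2 + A1_3)) by ring end.
  exact Hbound.
Qed.
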